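(* Let $Q$ be a $3\times 3$ array containing each of the symbols $0,1,\dots,8$ exactly once, such that each row and each column of $Q$ has sum $12$. Then either the entry sets of the three rows of $Q$ are $\{0,4,8\}$, $\{1,5,6\}$, $\{2,3,7\}$ (in some order) and the entry sets of the three columns are $\{0,5,7\}$, $\{2,4,6\}$, $\{1,3,8\}$ (in some order), or the same holds with the roles of rows and columns interchanged. *)

From mathcomp Require Import all_boot.
Set Implicit Arguments. Unset Strict Implicit. Unset Printing Implicit Defensive.

Definition array3 := 'I_3 -> 'I_3 -> 'I_9.

Definition symset (s : seq nat) : {set 'I_9} := [set k : 'I_9 | val k \in s].

Definition row_set (Q : array3) (i : 'I_3) : {set 'I_9} := [set Q i j | j : 'I_3].
Definition col_set (Q : array3) (j : 'I_3) : {set 'I_9} := [set Q i j | i : 'I_3].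

Definition row_sets (Q : array3) : {set {set 'I_9}} := [set row_set Q i | i : 'I_3].
Definition col_sets (Q : array3) : {set {set 'I_9}} := [set col_set Q j | j : 'I_3].

Definition rowsA : {set {set 'I_9}} :=
  [set symset [:: 0; 4; 8]; symset [:: 1; 5; 6]; symset [:: 2; 3; 7]].
Definition colsA : {set {set 'I_9}} :=
  [set symset [:: 0; 5; 7]; symset [:: 2; 4; 6]; symset [:: 1; 3; 8]].

(* The row and column sums force the whole array to be determined by its
   upper left 2x2 block, so only the 9^4 choices of that block have to be
   examined. *)

From mathcomp Require Import all_boot zify.

Set Implicit Arguments.
Unset Strict Implicit.
Unset Printing Implicit Defensive.

Definition tr_array (Q : array3) : array3 := fun i j => Q j i.

Lemma col_sets_tr (Q : array3) : col_sets Q = row_sets (tr_array Q).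
Proof. by []. Qed.

Definition ord1_3 : 'I_3 := inord 1.

Lemma enum_ord3 : enum 'I_3 = [:: ord0; ord1_3; ord_max].
Proof. by apply: (inj_map val_inj); rewrite val_enum_ord /= inordK. Qed.

Lemma sum_ord3 (F : 'I_3 -> nat) :
  \sum_(j < 3) F j = F ord0 + F ord1_3 + F ord_max.
Proof.
by rewrite -(big_enum _ _ 'I_3) enum_ord3 !big_cons big_nil /= addn0 addnA.
Qed.

Definition rows_nat (Q : array3) : seq (seq nat) :=
  [seq [seq val (Q i j) | j <- enum 'I_3] | i <- enum 'I_3].

Definition family (M : seq (seq nat)) : {set {set 'I_9}} := [set:: map symset M].

Lemma row_set_nat (Q : array3) (i : 'I_3) :
  row_set Q i = symset [seq val (Q i j) | j <- enum 'I_3].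
Proof.
apply/setP=> k; rewrite !inE map_comp (mem_map val_inj).
by apply/imsetP/mapP=> -[j _ ->]; exists j; rewrite ?mem_enum.
Qed.

Lemma row_sets_nat (Q : array3) : row_sets Q = family (rows_nat Q).
Proof.
apply/setP=> X; rewrite inE -map_comp.
apply/imsetP/mapP=> -[i _ ->]; exists i; rewrite ?mem_enum //=.
  exact: row_set_nat.
by rewrite row_set_nat.
Qed.

Lemma symset_sort (s : seq nat) : symset (sort leq s) = symset s.
Proof. by apply/setP=> k; rewrite !inE mem_sort. Qed.

Lemma family_perm (M N : seq (seq nat)) :
  perm_eq (map (sort leq) M) N -> family M = family N.
Proof.
move=> /(perm_map symset); rewrite -map_comp (eq_map symset_sort) => MN.
by apply/setP=> X; rewrite !inE (perm_mem MN).
Qed.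

Definition rowsA_nat : seq (seq nat) := [:: [:: 0; 4; 8]; [:: 1; 5; 6]; [:: 2; 3; 7]].
Definition colsA_nat : seq (seq nat) := [:: [:: 0; 5; 7]; [:: 2; 4; 6]; [:: 1; 3; 8]].

Lemma rowsAE : rowsA = family rowsA_nat.
Proof. by apply/setP=> X; rewrite !inE orbA. Qed.

Lemma colsAE : colsA = family colsA_nat.
Proof. by apply/setP=> X; rewrite !inE orbA. Qed.

Lemma flatten_rows_perm (Q : array3) :
  (forall k : 'I_9, exists p : 'I_3 * 'I_3, Q p.1 p.2 = k) ->
  perm_eq (flatten (rows_nat Q)) (iota 0 9).
Proof.
move=> Qonto; set s := flatten _.
have iota_sub : {subset iota 0 9 <= s}.
  move=> k; rewrite mem_iota add0n /= => lt_k9.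
  have [[i j] /= Qij] := Qonto (Ordinal lt_k9).
  apply/flatten_mapP; exists i; rewrite ?mem_enum //.
  by apply/mapP; exists j; rewrite ?mem_enum ?Qij.
have sub_iota : {subset s <= iota 0 9}.
  move=> k /flatten_mapP[i _ /mapP[j _ ->]].
  by rewrite mem_iota add0n ltn_ord.
have size_s : size s = 9 by rewrite /s /rows_nat enum_ord3.
rewrite perm_sym uniq_perm ?iota_uniq //.
  by apply: (leq_size_uniq (iota_uniq 0 9)); rewrite ?size_s.
by move=> k; apply/idP/idP=> [/iota_sub | /sub_iota].
Qed.

Definition completion (a b d e : nat) : seq (seq nat) :=
  [:: [:: a; b; 12 - a - b];
      [:: d; e; 12 - d - e];
      [:: 12 - a - d; 12 - b - e; a + b + d + e - 12]].

Lemma completionE (a b c d e f g h i : nat) :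
  a + b + c = 12 -> d + e + f = 12 ->
  a + d + g = 12 -> b + e + h = 12 -> c + f + i = 12 ->
  [:: [:: a; b; c]; [:: d; e; f]; [:: g; h; i]] = completion a b d e.
Proof.
by move=> *; congr [:: [:: _; _; _]; [:: _; _; _]; [:: _; _; _]]; lia.
Qed.

Lemma rows_nat_completion (Q : array3) :
  (forall i : 'I_3, \sum_(j < 3) nat_of_ord (Q i j) = 12) ->
  (forall j : 'I_3, \sum_(i < 3) nat_of_ord (Q i j) = 12) ->
  rows_nat Q = completion (Q ord0 ord0) (Q ord0 ord1_3)
                          (Q ord1_3 ord0) (Q ord1_3 ord1_3).
Proof.
move=> rowQ colQ; rewrite /rows_nat enum_ord3 /=.
apply: completionE.
- by rewrite -(rowQ ord0) sum_ord3.
- by rewrite -(rowQ ord1_3) sum_ord3.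
- by rewrite -(colQ ord0) sum_ord3.
- by rewrite -(colQ ord1_3) sum_ord3.
- by rewrite -(colQ ord_max) sum_ord3.
Qed.

Definition rowsA_colsA (R C : seq (seq nat)) : bool :=
  perm_eq (map (sort leq) R) rowsA_nat && perm_eq (map (sort leq) C) colsA_nat.

Definition completion_ok (a b d e : nat) : bool :=
  perm_eq (flatten (completion a b d e)) (iota 0 9) ==>
    rowsA_colsA (completion a b d e) (completion a d b e)
    || rowsA_colsA (completion a d b e) (completion a b d e).

Lemma completion_ok_all :
  all (fun a => all (fun b => all (fun d => all (completion_ok a b d)
    (iota 0 9)) (iota 0 9)) (iota 0 9)) (iota 0 9).
Proof. by vm_compute. Qed.

(* Truncated subtraction can produce spurious completions; the finite check
   covers them as well, so no sum hypothesis is needed. *)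
Lemma completion_classification (a b d e : nat) :
  perm_eq (flatten (completion a b d e)) (iota 0 9) ->
  rowsA_colsA (completion a b d e) (completion a d b e)
  || rowsA_colsA (completion a d b e) (completion a b d e).
Proof.
move=> perm_abde.
have /and5P[a9 b9 d9 e9 _] : all (fun x => x \in iota 0 9) [:: a; b; d; e].
  apply/allP=> x /=; rewrite -(perm_mem perm_abde) !inE.
  by case/or4P=> /eqP->; rewrite /= ?inE eqxx ?orbT.
apply: (implyP (allP (allP (allP (allP completion_ok_all a a9) b b9) d d9) e e9)).
exact: perm_abde.
Qed.

Theorem lemma3p1 (Q : 'I_3 -> 'I_3 -> 'I_9) :
  (forall k : 'I_9, exists! p : 'I_3 * 'I_3, Q p.1 p.2 = k) ->
  (forall i : 'I_3, \sum_(j < 3) nat_of_ord (Q i j) = 12) ->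
  (forall j : 'I_3, \sum_(i < 3) nat_of_ord (Q i j) = 12) ->
  (row_sets Q = rowsA /\ col_sets Q = colsA) \/
  (col_sets Q = rowsA /\ row_sets Q = colsA).
Proof.
move=> Qbij rowQ colQ.
have Qonto k : exists p : 'I_3 * 'I_3, Q p.1 p.2 = k.
  by have [p [Qp _]] := Qbij k; exists p.
have := flatten_rows_perm Qonto.
rewrite col_sets_tr !row_sets_nat rowsAE colsAE.
rewrite (rows_nat_completion rowQ colQ).
rewrite (rows_nat_completion (Q := tr_array Q) colQ rowQ).
move=> /completion_classification /orP[] /andP[rowsQ colsQ].
- by left; split; apply: family_perm.
- by right; split; apply: family_perm.
Qed.
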